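(* Let $P$ be a nonempty rational polyhedron whose affine hull is $\{x:Ax=b\}$, where $A,b$ are integral. Then for every prime $p$, $P$ contains a $p$-adic point if, and only if, there does not exist a real vector $y$ such that $y^\top A$ is integral and $y^\top b$ is not a $p$-adic rational.
   Context: A $p$-adic rational is a number $a/p^k$ with $a,k\in\mathbb{Z}$, $k\ge0$; a vector is $p$-adic if all entries are $p$-adic rationals. *)

From HB Require Import structures.
From mathcomp Require Import all_boot all_order all_algebra.
From mathcomp Require Import reals.
Set Implicit Arguments. Unset Strict Implicit. Unset Printing Implicit Defensive.
Import Order.TTheory GRing.Theory Num.Theory.
Local Open Scope ring_scope.

Definition padic_rat (R : realType) (p : nat) (x : R) : Prop :=
  exists (a : int) (k : nat), x = a%:~R / (p%:R) ^+ k.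

Definition padic_vec (R : realType) (p n : nat) (x : 'cV[R]_n) : Prop :=
  forall i, padic_rat p (x i 0).

Definition int_row (R : realType) (n : nat) (v : 'rV[R]_n) : Prop :=
  forall j, v 0 j \is a Num.int.

Definition intmx (R : realType) (m n : nat) (A : 'M[int]_(m, n)) : 'M[R]_(m, n) :=
  map_mx (fun z : int => z%:~R) A.
Definition ratmx (R : realType) (m n : nat) (A : 'M[rat]_(m, n)) : 'M[R]_(m, n) :=
  map_mx (fun q : rat => ratr q) A.

Definition polyhedron (R : realType) (k n : nat) (C : 'M[rat]_(k, n))
  (d : 'cV[rat]_k) (x : 'cV[R]_n) : Prop :=
  forall i, (ratmx R C *m x) i 0 <= (ratmx R d) i 0.

Definition affine_hull (R : realType) (n : nat) (S : 'cV[R]_n -> Prop)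
  (x : 'cV[R]_n) : Prop :=
  exists (t : nat) (lam : 'I_t -> R) (v : 'I_t -> 'cV[R]_n),
    (forall i, S (v i)) /\ \sum_(i < t) lam i = 1 /\
    x = \sum_(i < t) lam i *: v i.

From HB Require Import structures.
From mathcomp Require Import all_boot all_order all_algebra.
From mathcomp Require Import reals boolp ring lra.
Import Order.TTheory GRing.Theory Num.Theory.
Local Open Scope ring_scope.
Set Implicit Arguments. Unset Strict Implicit.

(* If x is a p-adic point of P and y^T A is integral, then y^T b = (y^T A) x is
   an integral combination of p-adic rationals.  Conversely, pick a point c of
   P that satisfies strictly every inequality which is not an implicit equality
   of P; the implicit equalities hold on the whole affine hull {x | A x = b},
   so every solution of A x = b close enough to c lies in P.  Write
   A = L D Q in Smith normal form: the solutions are Q^-1 z with D z = D Q c.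
   Where column j of D is nonzero, z_j = (Q c)_j is forced, and it is p-adic
   because y^T = D_jj^-1 (row j of L^-1) gives y^T A = row j of Q (integral)
   and y^T b = (Q c)_j.  The other coordinates of z are free, so they can be
   chosen p-adic and arbitrarily close to those of Q c; then x = Q^-1 z is
   p-adic since Q^-1 is integral. *)

Lemma norm_mulmx_col_le (R : numDomainType) m n (M : 'M[R]_(m, n))
    (w : 'cV[R]_n) (e : R) :
  (forall l, `|w l 0| <= e) ->
  forall i, `|(M *m w) i 0| <= (\sum_l `|M i l|) * e.
Proof.
move=> w_le i; rewrite mxE mulr_suml; apply: le_trans (ler_norm_sum _ _ _) _.
by apply: ler_sum => l _; rewrite normrM ler_wpM2l.
Qed.

Lemma row_mul_single_entry (F : fieldType) m n r (L Li : 'M[F]_m)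
    (D : 'M[F]_(m, n)) (Q : 'M[F]_(n, r)) i j :
  Li *m L = 1%:M -> D i j != 0 -> (forall l, l != j -> D i l = 0) ->
  ((D i j)^-1 *: row i Li) *m (L *m D *m Q) = row j Q.
Proof.
move=> LiL Dij_neq0 Di_supp.
have rowD : row i D = D i j *: delta_mx 0 j.
  apply/rowP => l; rewrite !mxE eqxx /=.
  by case: (eqVneq l j) => [-> | /Di_supp ->]; rewrite ?mulr1 ?mulr0.
rewrite -scalemxAl -row_mul !mulmxA LiL mul1mx !row_mul rowD -scalemxAl.
by rewrite scalerA mulVf // scale1r -rowE.
Qed.

Section PadicArithmetic.
Variables (R : realType) (p : nat).
Hypothesis p_gt0 : (0 < p)%N.

Let pX_neq0 k : (p%:R : R) ^+ k != 0.
Proof. by rewrite expf_neq0 // pnatr_eq0 -lt0n. Qed.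

Lemma padic_rat_int (x : R) : x \is a Num.int -> padic_rat p x.
Proof. by case/intrP=> z ->; exists z, 0%N; rewrite expr0 divr1. Qed.

Lemma padic_ratD (x y : R) :
  padic_rat p x -> padic_rat p y -> padic_rat p (x + y).
Proof.
case=> a [k ->] [b [l ->]].
exists (a * (p%:Z) ^+ l + b * (p%:Z) ^+ k), (k + l)%N.
rewrite rmorphD !rmorphM /= !rmorphXn /= exprD.
by field; rewrite !pX_neq0.
Qed.

Lemma padic_ratM (x y : R) :
  padic_rat p x -> padic_rat p y -> padic_rat p (x * y).
Proof.
case=> a [k ->] [b [l ->]]; exists (a * b), (k + l)%N.
by rewrite rmorphM /= exprD; field; rewrite !pX_neq0.
Qed.

Lemma padic_rat_sum (I : finType) (F : I -> R) :
  (forall i, padic_rat p (F i)) -> padic_rat p (\sum_i F i).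
Proof.
move=> F_padic; apply: (big_ind (padic_rat p)) => //; last exact: padic_ratD.
exact: padic_rat_int.
Qed.

Lemma padic_vec_mulmx m n (M : 'M[R]_(m, n)) (x : 'cV[R]_n) :
  (forall i j, M i j \is a Num.int) -> padic_vec p x -> padic_vec p (M *m x).
Proof.
move=> M_int x_padic i; rewrite mxE; apply: padic_rat_sum => j.
exact: padic_ratM (padic_rat_int (M_int i j)) (x_padic j).
Qed.

End PadicArithmetic.

Section PadicApproximation.
Variables (R : realType) (p : nat).
Hypothesis p_gt1 : (1 < p)%N.

Lemma exists_natrX_ge (r : R) : exists K, r <= p%:R ^+ K.
Proof.
exists (Num.truncn r); apply: le_trans (ltW (truncnS_gt r)) _.
by rewrite -natrX ler_nat ltn_expl.
Qed.

Lemma dist_floor_mulr_divr (x P : R) : 0 < P ->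
  `|(Num.floor (x * P))%:~R / P - x| <= P^-1.
Proof.
move=> P_gt0; have /andP[fl_le lt_fl] := floor_itv (x * P).
set f : R := (Num.floor (x * P))%:~R in fl_le lt_fl *.
rewrite intrD in lt_fl.
have -> : f / P - x = (f - x * P) / P by field; rewrite gt_eqF.
rewrite normrM normfV (gtr0_norm P_gt0) ler_pdivrMr // mulVf ?gt_eqF //.
by rewrite ler_norml; apply/andP; split; lra.
Qed.

Lemma padic_vec_approx n (c : 'cV[R]_n) (delta : R) : 0 < delta ->
  exists z, [/\ padic_vec p z, (forall l, padic_rat p (c l 0) -> z l 0 = c l 0)
    & forall l, `|z l 0 - c l 0| <= delta].
Proof.
move=> delta_gt0; have [K deltaV_le] := exists_natrX_ge delta^-1.
pose P : R := p%:R ^+ K.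
have P_gt0 : 0 < P by rewrite exprn_gt0 // ltr0n ltnW.
exists (\col_l if `[< padic_rat p (c l 0) >] then c l 0
               else (Num.floor (c l 0 * P))%:~R / P).
split=> l; rewrite mxE; case: asboolP => // _.
- by exists (Num.floor (c l 0 * P)), K.
- by rewrite subrr normr0 ltW.
apply: le_trans (dist_floor_mulr_divr _ P_gt0) _.
by rewrite -[delta]invrK lef_pV2 ?posrE ?invr_gt0.
Qed.

End PadicApproximation.

Section LinearInequalities.
Variables (R : realFieldType) (k n : nat) (C : 'M[R]_(k, n)) (d : 'cV[R]_k).
Let feasible (x : 'cV[R]_n) := forall i, (C *m x) i 0 <= d i 0.

Lemma exists_relative_interior x0 : feasible x0 ->
  exists2 c, feasible c & forall j,
    (C *m c) j 0 < d j 0 \/ forall x, feasible x -> (C *m x) j 0 = d j 0.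
Proof.
move=> x0_feas.
have witness j : exists v, feasible v /\
    ((C *m v) j 0 < d j 0 \/ forall x, feasible x -> (C *m x) j 0 = d j 0).
  have [[v [v_feas v_lt]] | no_v] :=
    pselect (exists v, feasible v /\ (C *m v) j 0 < d j 0).
    by exists v; split=> //; left.
  exists x0; split=> //; right=> x x_feas; apply/eqP; rewrite eq_le x_feas /=.
  by rewrite leNgt; apply/negP=> lt; apply: no_v; exists x.
have [v v_spec] := fin_all_exists witness.
pose c := k.+1%:R^-1 *: (x0 + \sum_i v i).
have slack_c j : d j 0 - (C *m c) j 0 = k.+1%:R^-1 *
    ((d j 0 - (C *m x0) j 0) + \sum_i (d j 0 - (C *m v i) j 0)).
  rewrite sumrB sumr_const card_ord -scalemxAr mulmxDr mulmx_sumr !mxE summxE.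
  by rewrite -mulr_natl -natr1; field; rewrite natr1 pnatr_eq0.
have slack_x0 j : 0 <= d j 0 - (C *m x0) j 0 by rewrite subr_ge0.
have slack_v j i : 0 <= d j 0 - (C *m v i) j 0.
  by rewrite subr_ge0; case: (v_spec i) => + _; apply.
have k1_gt0 : 0 < k.+1%:R^-1 :> R by rewrite invr_gt0 ltr0n.
exists c => j.
  rewrite -subr_ge0 slack_c (mulr_ge0 (ltW k1_gt0)) //.
  by rewrite addr_ge0 // sumr_ge0.
case: (v_spec j) => _ [v_lt | implicit]; last by right.
left; rewrite -subr_gt0 slack_c pmulr_rgt0 // (bigD1 j) //=.
have : 0 <= \sum_(i | i != j) (d j 0 - (C *m v i) j 0) by rewrite sumr_ge0.
have := slack_x0 j; rewrite -subr_gt0 in v_lt; lra.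
Qed.

Lemma strict_ineqs_stable (c : 'cV[R]_n) : exists2 eps, 0 < eps &
  forall x : 'cV[R]_n, (forall l, `|x l 0 - c l 0| <= eps) ->
  forall j, (C *m c) j 0 < d j 0 -> (C *m x) j 0 < d j 0.
Proof.
pose rowsum j := \sum_l `|C j l|.
pose gap j := d j 0 - (C *m c) j 0.
have rowsum_ge0 j : 0 <= rowsum j by rewrite sumr_ge0.
pose eps := \big[Num.min/1]_(j | (C *m c) j 0 < d j 0) (gap j / (rowsum j + 1)).
exists eps.
  apply/bigmin_gtP; split=> // j lt; rewrite divr_gt0 ?subr_gt0 //.
  by have := rowsum_ge0 j; lra.
move=> x x_near j lt.
have eps_le : eps <= gap j / (rowsum j + 1) by apply: bigmin_le_cond.
have gap_gt0 : 0 < gap j by rewrite subr_gt0.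
have dev : `|(C *m (x - c)) j 0| <= rowsum j * eps.
  by apply: norm_mulmx_col_le => l; rewrite !mxE.
have dev_lt : rowsum j * eps < gap j.
  apply: le_lt_trans (ler_wpM2l (rowsum_ge0 j) eps_le) _.
  rewrite mulrA ltr_pdivrMr; have := rowsum_ge0 j; nra.
have -> : (C *m x) j 0 = (C *m c) j 0 + (C *m (x - c)) j 0.
  by rewrite mulmxBr !mxE; ring.
have := ler_norm ((C *m (x - c)) j 0); rewrite /gap in dev_lt; lra.
Qed.

End LinearInequalities.

Lemma affine_hull_self (R : realType) n (S : 'cV[R]_n -> Prop) x :
  S x -> affine_hull S x.
Proof.
by move=> Sx; exists 1%N, (fun=> 1), (fun=> x); rewrite !big_ord1 scale1r.
Qed.

Lemma affine_hull_row_eq (R : realType) k n (S : 'cV[R]_n -> Prop)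
    (C : 'M[R]_(k, n)) j (e : R) :
  (forall x, S x -> (C *m x) j 0 = e) ->
  forall x, affine_hull S x -> (C *m x) j 0 = e.
Proof.
move=> S_eq x [t [lam [v [Sv [lam_sum ->]]]]].
rewrite mulmx_sumr summxE.
under eq_bigr => i _ do rewrite -scalemxAr mxE S_eq //.
by rewrite -mulr_suml lam_sum mul1r.
Qed.

Section IntegerMatrices.
Variable R : realType.

Lemma intmx_int m n (M : 'M[int]_(m, n)) i j : intmx R M i j \is a Num.int.
Proof. by rewrite mxE intr_int. Qed.

Lemma intmxM m n r (M : 'M[int]_(m, n)) (N : 'M[int]_(n, r)) :
  intmx R (M *m N) = intmx R M *m intmx R N.
Proof. exact: map_mxM. Qed.

Lemma intmx_mulVmx n (M : 'M[int]_n) : M \in unitmx ->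
  intmx R (invmx M) *m intmx R M = 1%:M.
Proof. by move=> M_unit; rewrite -intmxM mulVmx // /intmx map_mx1. Qed.

Lemma intmx_mulmxV n (M : 'M[int]_n) : M \in unitmx ->
  intmx R M *m intmx R (invmx M) = 1%:M.
Proof. by move=> M_unit; rewrite -intmxM mulmxV // /intmx map_mx1. Qed.

End IntegerMatrices.

Section PadicDensity.
Variables (R : realType) (p m n : nat) (A : 'M[int]_(m, n)) (b : 'cV[int]_m).
Hypothesis p_gt1 : (1 < p)%N.
Hypothesis no_certificate : forall u : 'rV[R]_m,
  int_row (u *m intmx R A) -> padic_rat p ((u *m intmx R b) 0 0).

Lemma padic_solutions_dense (c : 'cV[R]_n) (eps : R) :
  intmx R A *m c = intmx R b -> 0 < eps ->
  exists x, [/\ padic_vec p x, intmx R A *m x = intmx R b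
    & forall l, `|x l 0 - c l 0| <= eps].
Proof.
move=> Ac_b eps_gt0.
have [L L_unit [Q Q_unit [s _ defA]]] := int_Smith_normal_form A.
set D := \matrix_(i, j) _ in defA.
have defAR : intmx R A = intmx R L *m intmx R D *m intmx R Q.
  by rewrite defA !intmxM.
pose zc := intmx R Q *m c.
have zc_padic i j : D i j != 0 -> padic_rat p (zc j 0).
  move=> Dij_neq0.
  have Di_supp l : l != j -> intmx R D i l = 0.
    move=> l_neq_j; rewrite !mxE.
    have [il | _] := eqVneq (i : nat) l; last by rewrite mulrb.
    move: Dij_neq0; rewrite mxE; have [ij | _] := eqVneq (i : nat) j.
      by case/eqP: l_neq_j; apply: val_inj; rewrite /= -il -ij.
    by rewrite mulrb eqxx.
  have DRij_neq0 : intmx R D i j != 0 by rewrite mxE intr_eq0.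
  have := row_mul_single_entry (intmx R Q) (intmx_mulVmx R L_unit)
    DRij_neq0 Di_supp.
  rewrite -defAR; set u := _ *: _ => uA.
  have /no_certificate : int_row (u *m intmx R A).
    by rewrite uA => l; rewrite mxE intmx_int.
  by rewrite -Ac_b mulmxA uA -row_mul mxE.
pose Qi := intmx R (invmx Q).
pose rowmax := \big[Num.max/0]_l \sum_k `|Qi l k|.
have rowmax_ge0 : 0 <= rowmax := bigmax_ge_id _ _ _ _.
have [z [z_padic z_eq z_near]] :=
  padic_vec_approx p_gt1 zc (divr_gt0 eps_gt0 (ltr_wpDl rowmax_ge0 ltr01)).
have Dz : intmx R D *m z = intmx R D *m zc.
  apply/matrixP => i r; rewrite (ord1 r) !mxE; apply: eq_bigr => l _.
  have [Dil | Dil] := eqVneq (D i l) 0; first by rewrite mxE Dil !mul0r.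
  by rewrite z_eq //; apply: zc_padic Dil.
exists (Qi *m z); split.
- apply: (padic_vec_mulmx (ltnW p_gt1) (intmx_int R (invmx Q)) z_padic).
- rewrite defAR -!mulmxA (mulmxA (intmx R Q)) intmx_mulmxV // mul1mx Dz.
  by rewrite /zc !mulmxA -defAR.
move=> l.
have -> : (Qi *m z) l 0 - c l 0 = (Qi *m (z - zc)) l 0.
  by rewrite mulmxBr mulmxA intmx_mulVmx // mul1mx !mxE.
have zc_near l' : `|(z - zc) l' 0| <= eps / (rowmax + 1).
  by rewrite mxE [X in _ + X]mxE; apply: z_near.
apply: le_trans (norm_mulmx_col_le Qi zc_near l) _.
rewrite mulrA ler_pdivrMr ?(ltr_wpDl rowmax_ge0 ltr01) //.
rewrite mulrC ler_wpM2l ?ltW //.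
apply: le_lt_trans (le_bigmax 0 (fun l => \sum_k `|Qi l k|) l) _.
by rewrite ltrDl.
Qed.

End PadicDensity.

Theorem corollary2p6 (R : realType) (n m k : nat)
  (C : 'M[rat]_(k, n)) (d : 'cV[rat]_k)
  (A : 'M[int]_(m, n)) (b : 'cV[int]_m) :
  (exists x : 'cV[R]_n, polyhedron C d x) ->
  (forall x : 'cV[R]_n,
      affine_hull (polyhedron C d) x <-> intmx R A *m x = intmx R b) ->
  forall p : nat, prime p ->
    ((exists x : 'cV[R]_n, polyhedron C d x /\ padic_vec p x) <->
     ~ (exists y : 'cV[R]_m,
          int_row (y^T *m intmx R A) /\ ~ padic_rat p ((y^T *m intmx R b) 0 0))).
Proof.
move=> [x0 x0_in] aff_hullE p p_prime.
have p_gt1 := prime_gt1 p_prime.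
have solves x : polyhedron C d x -> intmx R A *m x = intmx R b.
  by move=> x_in; apply/aff_hullE/affine_hull_self.
split.
  move=> [x [x_in x_padic]] [y [yA_int yb_npadic]]; apply: yb_npadic.
  rewrite -(solves _ x_in) mulmxA.
  have yA_entries_int i j : (y^T *m intmx R A) i j \is a Num.int.
    by rewrite (ord1 i).
  by have := padic_vec_mulmx (ltnW p_gt1) yA_entries_int x_padic 0.
move=> no_certificate.
have [c c_in c_relint] := exists_relative_interior x0_in.
have [eps eps_gt0 eps_stable] := strict_ineqs_stable (ratmx R C) (ratmx R d) c.
have [|x [x_padic x_solves x_near]] :=
  padic_solutions_dense p_gt1 _ (solves _ c_in) eps_gt0.
  move=> u uA_int; apply: contrapT => ub_npadic; apply: no_certificate.
  by exists u^T; rewrite trmxK.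
exists x; split=> // j.
have [/(eps_stable _ x_near j)/ltW // | implicit] := c_relint j.
by rewrite (affine_hull_row_eq implicit (proj2 (aff_hullE x) x_solves)).
Qed.
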